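(* Let $A \in \mathbb{R}^{n\times n}$ and let $Q, D \in \mathbb{R}^{n\times n}$ be symmetric. Assume that $(A,D)$ is stabilizable and $(Q,A)$ is detectable, and let $P$ be the unique stabilizing solution of $A^T X + XA + Q - XDX = 0$. Let $$H = \begin{bmatrix} A & -D \\ -Q & -A^T\end{bmatrix},\qquad J=\begin{bmatrix}\mathbf{0}_n & I_n\\ -I_n & \mathbf{0}_n\end{bmatrix}.$$ Let $(\mu_j, v_j)$ and $(-\mu_j, v_{-j})$ be two right eigenpairs of $H$, where $\mu_j$ (and hence $-\mu_j$) is a (non-real) complex eigenvalue of $H$ with partial multiplicity $1$. Let $\theta_j := (v_j^T J v_{-j})^{-1}$ and $p_j = \theta_j J v_{-j}$, $q_j = \theta_j J v_j$. Then for any $\Delta\mu_j \in \mathbb{R}$ there exist $\tilde A\in\mathbb{R}^{n\times n}$ and symmetric $\tilde Q,\tilde D\in\mathbb{R}^{n\times n}$ such that $$H + 2\Delta\mu_j\,\mathrm{Re}\!\left(v_j p_j^T + v_{-j} q_j^T\right) = \begin{bmatrix} \tilde A & -\tilde D \\ -\tilde Q & -\tilde A^T\end{bmatrix}.$$ Moreover, if $\frac{\Delta\mu_j}{\mathrm{Re}(\mu_j)} > -1$, then $P$ is the unique stabilizing solution of $\tilde A^T X + X\tilde A + \tilde Q - X\tilde D X = 0$.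
   Context: A solution $X$ of $A^TX+XA+Q-XDX=0$ is stabilizing if $A-DX$ is Hurwitz; such a solution, if it exists, is unique. The partial multiplicity of an eigenvalue refers to the size of a Jordan block for that eigenvalue in the Jordan normal form; partial multiplicity $1$ means the Jordan blocks of that eigenvalue have size $1$. $\mathrm{Re}$ denotes the entrywise real part. The definition of $\theta_j$ presupposes $v_j^TJv_{-j}\neq 0$. *)

From HB Require Import structures.
From mathcomp Require Import all_boot all_order all_algebra.
From mathcomp Require Import complex.
From mathcomp Require Import reals.

Set Implicit Arguments.
Unset Strict Implicit.
Unset Printing Implicit Defensive.

Import Order.TTheory GRing.Theory Num.Theory.
Local Open Scope ring_scope.

Section Defs.
Variable R : realType.

Definition cmx {m n} (M : 'M[R]_(m, n)) : 'M[R[i]]_(m, n) :=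
  map_mx (fun x => x%:C%C) M.

Definition Remx {m n} (M : 'M[R[i]]_(m, n)) : 'M[R]_(m, n) :=
  map_mx (@complex.Re R) M.

Definition hurwitz {n} (M : 'M[R]_n) : Prop :=
  forall l : R[i], eigenvalue (cmx M) l -> complex.Re l < 0.

Definition stabilizable {n} (A D : 'M[R]_n) : Prop :=
  exists K : 'M[R]_n, hurwitz (A - D *m K).

Definition detectable {n} (Q A : 'M[R]_n) : Prop :=
  exists L : 'M[R]_n, hurwitz (A - L *m Q).

Definition riccati {n} (A Q D X : 'M[R]_n) : Prop :=
  A^T *m X + X *m A + Q - X *m D *m X = 0.

Definition stabilizing_sol {n} (A Q D X : 'M[R]_n) : Prop :=
  riccati A Q D X /\ hurwitz (A - D *m X).

Definition unique_stabilizing_sol {n} (A Q D X : 'M[R]_n) : Prop :=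
  stabilizing_sol A Q D X /\
  forall Y : 'M[R]_n, stabilizing_sol A Q D Y -> Y = X.

Definition hamiltonian {n} (A Q D : 'M[R]_n) : 'M[R]_(n + n) :=
  block_mx A (- D) (- Q) (- A^T).

Definition Jmx {K : nzRingType} n : 'M[K]_(n + n) :=
  block_mx 0 1%:M (- 1%:M) 0.

(* eigenvalue l of M has partial multiplicity 1 (all Jordan blocks of size 1):
   its algebraic multiplicity equals its geometric multiplicity *)
Definition semisimple_eig {n} (M : 'M[R[i]]_n) (l : R[i]) : Prop :=
  mup l (char_poly M) = \rank (eigenspace M l).

End Defs.

(* Since P is stabilizing, the columns of graph_mx P = [I; P] span an
   H-invariant subspace on which H acts as the closed-loop matrix A - D P, and
   graph_ann P = [-P I] intertwines H with -(A - D P)^T.  If graph_ann P killed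
   neither v nor v_{-j}, both mu and -mu would be eigenvalues of the Hurwitz
   matrix A - D P; so one of them, say v, lies in the graph.  The perturbation
   is S J with S real symmetric, hence again Hamiltonian; it maps the graph into
   itself, so P still solves the perturbed Riccati equation, and there it acts as
   A - D P + dmu (x y^T + conj (x y^T)) with x the top half of v and y the
   left eigenvector of A - D P built from v_{-j}.  This rank-two term shifts mu
   and its conjugate by dmu and fixes the rest of the spectrum, and
   dmu / Re mu > -1 keeps the shifted pair stable.  Uniqueness comes from the
   uniqueness of solutions of Sylvester equations with Hurwitz coefficients. *)

From HB Require Import structures.
From mathcomp Require Import all_boot all_order all_algebra.
From mathcomp Require Import complex.
From mathcomp Require Import reals.
From mathcomp Require Import ring lra.
Import Order.TTheory GRing.Theory Num.Theory.
Local Open Scope ring_scope.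
Set Implicit Arguments.
Unset Strict Implicit.
Unset Printing Implicit Defensive.

Section Complexification.
Variable R : realType.

Lemma cmxE m n (M : 'M[R]_(m, n)) : cmx M = map_mx (real_complex R) M.
Proof. by []. Qed.

Lemma cmxM m n p (M : 'M[R]_(m, n)) (N : 'M[R]_(n, p)) :
  cmx (M *m N) = cmx M *m cmx N.
Proof. by rewrite !cmxE map_mxM. Qed.

Lemma cmxD m n (M N : 'M[R]_(m, n)) : cmx (M + N) = cmx M + cmx N.
Proof. by rewrite !cmxE map_mxD. Qed.

Lemma cmxN m n (M : 'M[R]_(m, n)) : cmx (- M) = - cmx M.
Proof. by rewrite !cmxE map_mxN. Qed.

Lemma cmxT m n (M : 'M[R]_(m, n)) : cmx M^T = (cmx M)^T.
Proof. by rewrite !cmxE map_trmx. Qed.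

Lemma cmxZ m n (a : R) (M : 'M[R]_(m, n)) : cmx (a *: M) = a%:C%C *: cmx M.
Proof. by apply/matrixP=> i j; rewrite !mxE rmorphM. Qed.

Lemma cmx0 m n : cmx (0 : 'M[R]_(m, n)) = 0.
Proof. by rewrite cmxE map_mx0. Qed.

Lemma cmx1 n : cmx (1%:M : 'M[R]_n) = 1%:M.
Proof. by rewrite cmxE map_mx1. Qed.

Lemma cmx_inj m n : injective (@cmx R m n).
Proof.
move=> M N /matrixP eMN; apply/matrixP=> i j.
by have := eMN i j; rewrite !mxE => /complexI.
Qed.

Lemma cmx_row_mx m n1 n2 (M : 'M[R]_(m, n1)) (N : 'M[R]_(m, n2)) :
  cmx (row_mx M N) = row_mx (cmx M) (cmx N).
Proof. by rewrite !cmxE map_row_mx. Qed.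

Lemma cmx_col_mx m1 m2 n (M : 'M[R]_(m1, n)) (N : 'M[R]_(m2, n)) :
  cmx (col_mx M N) = col_mx (cmx M) (cmx N).
Proof. by rewrite !cmxE map_col_mx. Qed.

Lemma cmx_Jmx n : cmx (Jmx n : 'M[R]_(n + n)) = Jmx n.
Proof. by rewrite cmxE map_block_mx map_mx0 map_mxN map_mx1. Qed.

Definition conjm m n (M : 'M[R[i]]_(m, n)) := map_mx (@conjc R) M.

Lemma conjmM m n p (M : 'M[R[i]]_(m, n)) (N : 'M[R[i]]_(n, p)) :
  conjm (M *m N) = conjm M *m conjm N.
Proof. by rewrite /conjm map_mxM. Qed.

Lemma conjmZ m n (a : R[i]) (M : 'M[R[i]]_(m, n)) :
  conjm (a *: M) = a^*%C *: conjm M.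
Proof. by apply/matrixP=> i j; rewrite !mxE rmorphM. Qed.

Lemma conjmT m n (M : 'M[R[i]]_(m, n)) : conjm M^T = (conjm M)^T.
Proof. by rewrite /conjm map_trmx. Qed.

Lemma conjm_cmx m n (M : 'M[R]_(m, n)) : conjm (cmx M) = cmx M.
Proof. by apply/matrixP=> i j; rewrite !mxE conjc_real. Qed.

Lemma conjc_neq_nonreal (z : R[i]) : complex.Im z != 0 -> z^*%C != z.
Proof.
case: z => a b /= b_neq0; rewrite eq_complex /= eqxx /=.
by apply: contra b_neq0 => /eqP Nbb; apply/eqP; lra.
Qed.

Lemma ReN (z : R[i]) : complex.Re (- z) = - complex.Re z.
Proof. by case: z. Qed.

Lemma ImN (z : R[i]) : complex.Im (- z) = - complex.Im z.
Proof. by case: z. Qed.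

Lemma cmx_Remx m n (M : 'M[R[i]]_(m, n)) : cmx (Remx M) = 2^-1 *: (M + conjm M).
Proof. by apply/matrixP=> i j; rewrite !mxE ReJ_add mulrC. Qed.

Lemma RemxN m n (M : 'M[R[i]]_(m, n)) : Remx (- M) = - Remx M.
Proof. by apply/matrixP=> i j; rewrite !mxE; case: (M i j). Qed.

Lemma Remx0 m n : Remx (0 : 'M[R[i]]_(m, n)) = 0.
Proof. by apply/matrixP=> i j; rewrite !mxE. Qed.

Lemma Remx_tr m n (M : 'M[R[i]]_(m, n)) : Remx M^T = (Remx M)^T.
Proof. by rewrite /Remx map_trmx. Qed.

Lemma Remx_usubmx m1 m2 n (M : 'M[R[i]]_(m1 + m2, n)) :
  Remx (usubmx M) = usubmx (Remx M).
Proof. by rewrite /Remx map_usubmx. Qed.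

Lemma Remx_mulmxl m n p (M : 'M[R]_(m, n)) (S : 'M[R[i]]_(n, p)) :
  Remx (cmx M *m S) = M *m Remx S.
Proof.
apply: cmx_inj; rewrite cmxM !cmx_Remx conjmM conjm_cmx.
by rewrite -mulmxDr scalemxAr.
Qed.

Lemma Remx_mulmxr m n p (S : 'M[R[i]]_(m, n)) (M : 'M[R]_(n, p)) :
  Remx (S *m cmx M) = Remx S *m M.
Proof.
apply: cmx_inj; rewrite cmxM !cmx_Remx conjmM conjm_cmx.
by rewrite -mulmxDl scalemxAl.
Qed.

End Complexification.

Lemma eigenvalue_tr (F : fieldType) n (M : 'M[F]_n) a :
  eigenvalue M^T a = eigenvalue M a.
Proof.
rewrite !eigenvalue_root_char /char_poly -det_tr; congr (root (determinant _) a).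
by apply/matrixP=> i j; rewrite !mxE eq_sym.
Qed.

Lemma eigenvalueN (F : fieldType) n (M : 'M[F]_n) a :
  eigenvalue (- M) a -> eigenvalue M (- a).
Proof.
case/eigenvalueP=> v vM v_neq0; apply/eigenvalueP; exists v => //.
by rewrite scaleNr -vM mulmxN opprK.
Qed.

Lemma left_right_eigenvalue_eq (F : fieldType) n (M : 'M[F]_n)
    (z : 'rV_n) (w : 'cV_n) a b :
  z *m M = a *: z -> M *m w = b *: w -> z *m w != 0 -> a = b.
Proof.
move=> zM Mw zw_neq0; apply/eqP; rewrite -subr_eq0.
have : (a - b) *: (z *m w) = 0.
  by rewrite scalerBl scalemxAl -zM -mulmxA Mw -scalemxAr subrr.
by move/eqP; rewrite scaler_eq0 (negbTE zw_neq0) orbF.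
Qed.

Lemma horner_mx_intertwine (F : fieldType) n (G H X : 'M[F]_n.+1) (p : {poly F}) :
  G *m X = X *m H -> horner_mx G p *m X = X *m horner_mx H p.
Proof.
move=> GX; elim/poly_ind: p => [|p c IHp]; first by rewrite !rmorph0 mul0mx mulmx0.
rewrite !rmorphD !rmorphM /= !horner_mx_X !horner_mx_C.
rewrite mulmxDl mulmxDr -!mulmxE -mulmxA GX mulmxA IHp -mulmxA.
by rewrite mul_scalar_mx mul_mx_scalar.
Qed.
Lemma sylvester_eq0 (F : closedFieldType) n (G H X : 'M[F]_n) :
  (forall a, eigenvalue G a -> ~~ eigenvalue H a) -> G *m X = X *m H -> X = 0.
Proof.
(* Bezout makes (char_poly G)(H) invertible, while Cayley-Hamilton gives
   X (char_poly G)(H) = (char_poly G)(G) X = 0. *)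
case: n G H X => [|n] G H X disjGH GX; first by apply/matrixP=> [[]].
have /Bezout_eq1_coprimepP[[u1 u2] /= Bezout] : coprimep (char_poly H) (char_poly G).
  apply: Pdiv.ClosedField.root_coprimep => a rootH.
  apply/negP; rewrite -rootE -eigenvalue_root_char => /disjGH.
  by rewrite eigenvalue_root_char rootH.
have invGH : horner_mx H (char_poly G) *m horner_mx H u2 = 1%:M.
  have := congr1 (horner_mx H) Bezout.
  rewrite rmorphD !rmorphM /= Cayley_Hamilton mulr0 add0r rmorph1.
  by rewrite comm_horner_mx2 mulmxE.
have XGH : X *m horner_mx H (char_poly G) = 0.
  by rewrite -(horner_mx_intertwine _ GX) Cayley_Hamilton mul0mx.
by rewrite -[X]mulmx1 -invGH mulmxA XGH mul0mx.
Qed.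

Lemma lyapunov_eq0 (R : realType) n (M N X : 'M[R]_n) :
  hurwitz M -> hurwitz N -> M^T *m X + X *m N = 0 -> X = 0.
Proof.
move=> hurM hurN MXN; apply: cmx_inj; rewrite cmx0.
apply: (@sylvester_eq0 _ _ (cmx M)^T (- cmx N)).
  move=> a; rewrite eigenvalue_tr => /hurM Ra_lt0.
  apply/negP => /eigenvalueN /hurN; rewrite ReN oppr_lt0.
  by move=> /(lt_trans Ra_lt0); rewrite ltxx.
by apply/eqP; rewrite mulmxN -subr_eq0 opprK -cmxT -!cmxM -cmxD MXN cmx0.
Qed.

Lemma hurwitz_add_Re_dyad (R : realType) n (M : 'M[R]_n) (x y : 'cV[R[i]]_n)
    (lam : R[i]) (d : R) :
  hurwitz M -> cmx M *m x = lam *: x -> y^T *m cmx M = lam *: y^T ->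
  y^T *m x = 1%:M -> complex.Im lam != 0 -> complex.Re lam + d < 0 ->
  hurwitz (M + (2 * d) *: Remx (x *m y^T)).
Proof.
(* conj y is orthogonal to x since lam is not real, so the perturbation only
   moves x and conj x; a left eigenvector orthogonal to both is one of M. *)
move=> hurM Mx yM yx lam_nonreal shift_lt0.
set B := M + _.
have cB : cmx B = cmx M + d%:C%C *: (x *m y^T + conjm (x *m y^T)).
  rewrite cmxD cmxZ cmx_Remx scalerA rmorphM /= rmorph_nat.
  by rewrite mulrAC mulfV ?mul1r ?pnatr_eq0.
have cyM : (conjm y)^T *m cmx M = lam^*%C *: (conjm y)^T.
  by rewrite -conjmT -(conjm_cmx M) -conjmM yM conjmZ.
have cyx : (conjm y)^T *m x = 0.
  apply: contraNeq (conjc_neq_nonreal lam_nonreal).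
  by move/(left_right_eigenvalue_eq cyM Mx) ->.
have Bx : cmx B *m x = (lam + d%:C%C) *: x.
  rewrite cB mulmxDl Mx -scalemxAl mulmxDl -!mulmxA yx conjmM conjmT -mulmxA cyx.
  by rewrite mulmx0 addr0 mulmx1 scalerDl.
have Bcx : cmx B *m conjm x = (lam + d%:C%C)^*%C *: conjm x.
  by rewrite -(conjm_cmx B) -conjmM Bx conjmZ.
move=> a /eigenvalueP [z zB z_neq0].
have [zx_eq0|/(left_right_eigenvalue_eq zB Bx) ->] := eqVneq (z *m x) 0;
  last by case: (lam) shift_lt0.
have [zcx_eq0|/(left_right_eigenvalue_eq zB Bcx) ->] := eqVneq (z *m conjm x) 0;
  last by case: (lam) shift_lt0.
apply: hurM; apply/eigenvalueP; exists z => //.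
rewrite -zB cB mulmxDr -scalemxAr mulmxDr mulmxA zx_eq0 mul0mx add0r.
by rewrite conjmM mulmxA zcx_eq0 mul0mx scaler0 addr0.
Qed.

Section Riccati.
Variables (R : realType) (n : nat).
Implicit Types A Q D P X Y : 'M[R]_n.

Definition riccati_res A Q D X : 'M[R]_n := A^T *m X + X *m A + Q - X *m D *m X.

Lemma riccati_resB A Q D X Y :
  (A^T - Y *m D) *m (X - Y) + (X - Y) *m (A - D *m X)
  = riccati_res A Q D X - riccati_res A Q D Y.
Proof.
rewrite /riccati_res !mulmxBl !mulmxBr !mulmxA.
by apply/matrixP=> i j; rewrite !mxE; ring.
Qed.

Lemma riccati_res_tr A Q D X :
  Q^T = Q -> D^T = D -> riccati_res A Q D X^T = (riccati_res A Q D X)^T.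
Proof.
move=> symQ symD; rewrite /riccati_res !raddfB /= !raddfD /= !trmx_mul !trmxK.
by rewrite symQ symD mulmxA (addrC (X^T *m A)).
Qed.

Lemma trmx_closed_loop A D X : D^T = D -> (A - D *m X)^T = A^T - X^T *m D.
Proof. by move=> symD; rewrite raddfB /= trmx_mul symD. Qed.

Lemma stabilizing_sol_sym A Q D P :
  Q^T = Q -> D^T = D -> stabilizing_sol A Q D P -> P^T = P.
Proof.
move=> symQ symD [ricP hurP]; have ricP' : riccati_res A Q D P = 0 := ricP.
have : (A - D *m P)^T *m (P - P^T) + (P - P^T) *m (A - D *m P) = 0.
  by rewrite trmx_closed_loop // (riccati_resB _ Q) riccati_res_tr // ricP' trmx0 subr0.
by move/(lyapunov_eq0 hurP hurP)/eqP; rewrite subr_eq0 => /eqP.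
Qed.

Lemma stabilizing_sol_unique A Q D P :
  Q^T = Q -> D^T = D -> stabilizing_sol A Q D P -> unique_stabilizing_sol A Q D P.
Proof.
move=> symQ symD stabP; split=> // Y [ricY hurY].
have ricY' : riccati_res A Q D Y = 0 := ricY.
have ricP' : riccati_res A Q D P = 0 := stabP.1.
have : (A - D *m P)^T *m (Y - P) + (Y - P) *m (A - D *m Y) = 0.
  by rewrite trmx_closed_loop // (stabilizing_sol_sym symQ symD stabP) (riccati_resB _ Q)
    ricY' ricP' subrr.
by move/(lyapunov_eq0 stabP.2 hurY)/eqP; rewrite subr_eq0 => /eqP.
Qed.

End Riccati.

Section GraphMatrices.
Variables (F : comNzRingType) (n : nat).
Implicit Types P : 'M[F]_n.

Definition graph_mx P : 'M[F]_(n + n, n) := col_mx 1%:M P.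

Definition graph_ann P : 'M[F]_(n, n + n) := row_mx (- P) 1%:M.

Lemma usubmx_graph_mx P m (M : 'M[F]_(n, m)) : usubmx (graph_mx P *m M) = M.
Proof. by rewrite /graph_mx mul_col_mx col_mxKu mul1mx. Qed.

Lemma graph_ann_eq0 P (x : 'cV[F]_(n + n)) :
  graph_ann P *m x = 0 -> x = graph_mx P *m usubmx x.
Proof.
rewrite -[x]vsubmxK col_mxKu /graph_ann /graph_mx mul_row_col mul_col_mx.
by rewrite !mul1mx mulNmx => /eqP; rewrite addrC subr_eq0 => /eqP ->.
Qed.

Lemma graph_mx_trJ P : P^T = P -> (graph_mx P)^T *m Jmx n = graph_ann P.
Proof.
move=> symP; rewrite /graph_mx /graph_ann /Jmx tr_col_mx tr_scalar_mx symP.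
by rewrite mul_row_block !mulmx0 !mul1mx mulmxN mulmx1 add0r addr0.
Qed.

End GraphMatrices.

Lemma cmx_graph_mx (R : realType) n (P : 'M[R]_n) : cmx (graph_mx P) = graph_mx (cmx P).
Proof. by rewrite /graph_mx cmx_col_mx cmx1. Qed.

Lemma cmx_graph_ann (R : realType) n (P : 'M[R]_n) : cmx (graph_ann P) = graph_ann (cmx P).
Proof. by rewrite /graph_ann cmx_row_mx cmxN cmx1. Qed.

Section PairDyad.
Variables (F : fieldType) (n : nat).
Implicit Types v w : 'cV[F]_(n + n).

Lemma Jmx_tr : (Jmx n : 'M[F]_(n + n))^T = - Jmx n.
Proof.
rewrite /Jmx tr_block_mx !trmx0 tr_scalar_mx raddfN /= tr_scalar_mx.
by rewrite opp_block_mx !oppr0 opprK.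
Qed.

Definition sympl_form v w : F := (v^T *m Jmx n *m w) 0 0.

Definition pair_dyad v w : 'M[F]_(n + n) :=
  let theta := (sympl_form v w)^-1 in
  v *m (theta *: (Jmx n *m w))^T + w *m (theta *: (Jmx n *m v))^T.

Lemma sympl_formC v w : sympl_form w v = - sympl_form v w.
Proof.
rewrite /sympl_form; have -> : w^T *m Jmx n *m v = - (v^T *m Jmx n *m w)^T.
  by rewrite !trmx_mul trmxK Jmx_tr mulNmx linearN /= opprK mulmxA.
by rewrite !mxE.
Qed.

Lemma pair_dyadC v w : pair_dyad w v = - pair_dyad v w.
Proof.
by rewrite /pair_dyad sympl_formC invrN !scaleNr !raddfN /= opprD addrC.
Qed.

Lemma pair_dyadE v w :
  pair_dyad v w = (- (sympl_form v w)^-1 *: (v *m w^T + w *m v^T)) *m Jmx n.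
Proof.
rewrite /pair_dyad !linearZ /= !trmx_mul Jmx_tr !mulmxN !mulmxA -scalemxAl mulmxDl.
by rewrite scaleNr !scalerN scalerDr opprD.
Qed.

Lemma pair_dyad_graph (P : 'M[F]_n) v w : P^T = P ->
  pair_dyad v w *m graph_mx P
  = (sympl_form v w)^-1 *: (v *m (graph_ann P *m w)^T + w *m (graph_ann P *m v)^T).
Proof.
move=> symP; have JxR x : (Jmx n *m x)^T *m graph_mx P = (graph_ann P *m x)^T.
  by rewrite -(graph_mx_trJ symP) !trmx_mul trmxK mulmxA.
rewrite /pair_dyad mulmxDl -!mulmxA !linearZ /= -!scalemxAl -!scalemxAr.
by rewrite !JxR scalerDr.
Qed.

Lemma sympl_form_graph (P : 'M[F]_n) v w : P^T = P -> graph_ann P *m v = 0 ->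
  sympl_form v w = ((usubmx v)^T *m (graph_ann P *m w)) 0 0.
Proof.
move=> symP /graph_ann_eq0 ->; rewrite usubmx_graph_mx /sympl_form trmx_mul.
by rewrite -(graph_mx_trJ symP) !mulmxA.
Qed.

End PairDyad.

Section Hamiltonian.
Variables (R : realType) (n : nat).
Implicit Types A Q D P : 'M[R]_n.

Lemma hamiltonian_graph_mx A Q D P : riccati A Q D P ->
  hamiltonian A Q D *m graph_mx P = graph_mx P *m (A - D *m P).
Proof.
move=> /matrixP ricP; rewrite /hamiltonian /graph_mx mul_block_col mul_col_mx.
rewrite !mulmx1 mul1mx mulmxBr mulmxA !mulNmx; congr col_mx.
by apply/matrixP=> i j; have := ricP i j; rewrite !mxE => ?; lra.
Qed.

Lemma graph_ann_hamiltonian A Q D P : D^T = D -> P^T = P -> riccati A Q D P ->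
  graph_ann P *m hamiltonian A Q D = - (A - D *m P)^T *m graph_ann P.
Proof.
move=> symD symP /matrixP ricP; rewrite trmx_closed_loop // symP.
rewrite /hamiltonian /graph_ann mul_row_block mul_mx_row !mulmx1 !mulNmx !mulmxN.
rewrite !mul1mx !mulmxBl; congr row_mx;
  by apply/matrixP=> i j; have := ricP i j; rewrite !mxE => ?; lra.
Qed.

Lemma graph_ann_hamiltonian_graph A Q D P :
  graph_ann P *m hamiltonian A Q D *m graph_mx P = - riccati_res A Q D P.
Proof.
rewrite /hamiltonian /graph_ann /graph_mx mul_row_block mul_row_col /riccati_res.
rewrite !mul1mx !mulmx1 !mulmxN !mulNmx !opprK !mulmxDl -!mulmxA !mulNmx.
by apply/matrixP=> i j; rewrite !mxE; ring.
Qed.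

Lemma usubmx_hamiltonian_graph A Q D P :
  usubmx (hamiltonian A Q D *m graph_mx P) = A - D *m P.
Proof.
rewrite /hamiltonian /graph_mx mul_block_col col_mxKu.
by rewrite mulmx1 mulNmx.
Qed.

Lemma hamiltonian_addJ A Q D (S : 'M[R]_(n + n)) :
  Q^T = Q -> D^T = D -> S^T = S ->
  exists At Qt Dt, [/\ Qt^T = Qt, Dt^T = Dt &
    hamiltonian A Q D + S *m Jmx n = hamiltonian At Qt Dt].
Proof.
move=> symQ symD; rewrite -[S]submxK tr_block_mx.
move=> /eq_block_mx [sym11 /matrixP tr21 _ sym22].
exists (A - ursubmx S), (Q + drsubmx S), (D - ulsubmx S); split.
- by rewrite raddfD /= sym22 symQ.
- by rewrite raddfB /= sym11 symD.
rewrite /hamiltonian /Jmx mulmx_block !mulmx0 !mulmxN !mulmx1 !add0r !addr0.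
by rewrite add_block_mx; congr block_mx; apply/matrixP=> i j;
  have := tr21 j i; rewrite !mxE => ?; lra.
Qed.

Lemma hamiltonian_perturbation_stabilizing A Q D P At Qt Dt (E : 'M[R]_(n + n)) :
  Qt^T = Qt -> Dt^T = Dt -> riccati A Q D P ->
  hamiltonian A Q D + E = hamiltonian At Qt Dt ->
  graph_ann P *m E *m graph_mx P = 0 ->
  hurwitz (A - D *m P + usubmx (E *m graph_mx P)) ->
  unique_stabilizing_sol At Qt Dt P.
Proof.
move=> symQt symDt ricP eqH annE hurE.
have ricPt : riccati_res At Qt Dt P = 0.
  rewrite -[LHS]opprK -graph_ann_hamiltonian_graph -eqH mulmxDr mulmxDl annE addr0.
  by rewrite graph_ann_hamiltonian_graph opprK.
have closed_loop : At - Dt *m P = A - D *m P + usubmx (E *m graph_mx P).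
  by rewrite -(usubmx_hamiltonian_graph At Qt) -eqH mulmxDl raddfD /=
    usubmx_hamiltonian_graph.
apply: (stabilizing_sol_unique symQt symDt); split; first exact: ricPt.
by rewrite closed_loop.
Qed.

End Hamiltonian.

Lemma hamiltonian_add_Re_pair_dyad (R : realType) n (A Q D : 'M[R]_n) (c : R)
    (v w : 'cV[R[i]]_(n + n)) :
  Q^T = Q -> D^T = D ->
  exists At Qt Dt, [/\ Qt^T = Qt, Dt^T = Dt &
    hamiltonian A Q D + c *: Remx (pair_dyad v w) = hamiltonian At Qt Dt].
Proof.
move=> symQ symD; rewrite pair_dyadE -cmx_Jmx Remx_mulmxr scalemxAl.
apply: (hamiltonian_addJ _ symQ symD).
by rewrite linearZ /= -Remx_tr linearZ /= raddfD /= !trmx_mul !trmxK addrC.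
Qed.

Section StabilizingSubspace.
Variables (R : realType) (n : nat) (A Q D P : 'M[R]_n).
Hypotheses (symQ : Q^T = Q) (symD : D^T = D) (stabP : stabilizing_sol A Q D P).

Local Notation Hc := (cmx (hamiltonian A Q D)).
Local Notation Pc := (cmx P).
Local Notation Acl := (A - D *m P).

Let symP : P^T = P := stabilizing_sol_sym symQ symD stabP.

Let symPc : Pc^T = Pc.
Proof. by rewrite -cmxT symP. Qed.

Lemma hamiltonian_graph_cmx : Hc *m graph_mx Pc = graph_mx Pc *m cmx Acl.
Proof. by rewrite -cmx_graph_mx -!cmxM (hamiltonian_graph_mx stabP.1). Qed.

Lemma graph_ann_hamiltonian_cmx : graph_ann Pc *m Hc = - (cmx Acl)^T *m graph_ann Pc.
Proof.
by rewrite -cmx_graph_ann -cmxM (graph_ann_hamiltonian symD symP stabP.1) cmxM cmxN cmxT.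
Qed.

Lemma graph_ann_eigvec (w : 'cV[R[i]]_(n + n)) lam : Hc *m w = lam *: w ->
  (graph_ann Pc *m w)^T *m cmx Acl = - lam *: (graph_ann Pc *m w)^T.
Proof.
move=> Hw; apply: trmx_inj; rewrite trmx_mul trmxK linearZ /= trmxK.
have : - (cmx Acl)^T *m (graph_ann Pc *m w) = lam *: (graph_ann Pc *m w).
  by rewrite mulmxA -graph_ann_hamiltonian_cmx -mulmxA Hw scalemxAr.
by rewrite scaleNr mulNmx => <-; rewrite opprK.
Qed.

Lemma graph_ann_eigvec_Re (w : 'cV[R[i]]_(n + n)) lam :
  Hc *m w = lam *: w -> graph_ann Pc *m w != 0 -> 0 < complex.Re lam.
Proof.
move=> Hw Lw_neq0; rewrite -oppr_lt0 -ReN; apply: stabP.2; apply/eigenvalueP.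
by exists (graph_ann Pc *m w)^T; [exact: graph_ann_eigvec | rewrite trmx_eq0].
Qed.

Lemma graph_ann_eigvec_pair (v w : 'cV[R[i]]_(n + n)) mu :
  Hc *m v = mu *: v -> Hc *m w = - mu *: w ->
  graph_ann Pc *m v = 0 \/ graph_ann Pc *m w = 0.
Proof.
move=> Hv Hw; have [|Lv_neq0] := eqVneq (graph_ann Pc *m v) 0; [by left | right].
apply/eqP; apply: contraTT (graph_ann_eigvec_Re Hv Lv_neq0).
by move=> /(graph_ann_eigvec_Re Hw); rewrite ReN oppr_gt0 => /lt_gtF ->.
Qed.

Lemma graph_eigvec (v : 'cV[R[i]]_(n + n)) mu :
  graph_ann Pc *m v = 0 -> Hc *m v = mu *: v ->
  cmx Acl *m usubmx v = mu *: usubmx v.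
Proof.
move=> /graph_ann_eq0 v_graph Hv.
rewrite -[LHS](usubmx_graph_mx Pc) mulmxA -hamiltonian_graph_cmx -mulmxA -v_graph Hv.
by apply/matrixP=> i j; rewrite !mxE.
Qed.

Lemma pair_perturbation_stabilizing (v w : 'cV[R[i]]_(n + n)) mu dmu At Qt Dt :
  Hc *m v = mu *: v -> Hc *m w = - mu *: w -> complex.Im mu != 0 ->
  graph_ann Pc *m v = 0 -> sympl_form v w != 0 -> -1 < dmu / complex.Re mu ->
  Qt^T = Qt -> Dt^T = Dt ->
  hamiltonian A Q D + (2 * dmu) *: Remx (pair_dyad v w) = hamiltonian At Qt Dt ->
  unique_stabilizing_sol At Qt Dt P.
Proof.
move=> Hv Hw mu_nonreal Lv k_neq0 dmu_gt symQt symDt eqH.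
set y := (sympl_form v w)^-1 *: (graph_ann Pc *m w).
have Kgraph : pair_dyad v w *m graph_mx Pc = v *m y^T.
  by rewrite pair_dyad_graph // Lv trmx0 mulmx0 addr0 /y linearZ /= scalemxAr.
have Lw_neq0 : graph_ann Pc *m w != 0.
  by apply: contraNneq k_neq0 => Lw; rewrite (sympl_form_graph _ symPc Lv) Lw mulmx0 mxE.
have Re_mu_lt0 : complex.Re mu < 0.
  by have := graph_ann_eigvec_Re Hw Lw_neq0; rewrite ReN oppr_gt0.
apply: (hamiltonian_perturbation_stabilizing symQt symDt stabP.1 eqH).
  rewrite -scalemxAr -scalemxAl -Remx_mulmxl -Remx_mulmxr cmx_graph_ann cmx_graph_mx.
  by rewrite -mulmxA Kgraph mulmxA Lv mul0mx Remx0 scaler0.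
have -> : usubmx ((2 * dmu) *: Remx (pair_dyad v w) *m graph_mx P)
          = (2 * dmu) *: Remx (usubmx v *m y^T).
  rewrite -scalemxAl -Remx_mulmxr cmx_graph_mx Kgraph mul_usub_mx Remx_usubmx.
  by apply/matrixP=> i j; rewrite !mxE.
apply: (hurwitz_add_Re_dyad stabP.2 (graph_eigvec Lv Hv) _ _ mu_nonreal).
- rewrite /y linearZ /= -scalemxAl (graph_ann_eigvec Hw) opprK.
  by rewrite scalerA mulrC -scalerA.
- rewrite /y linearZ /= -scalemxAl -[_ *m usubmx v]trmxK trmx_mul trmxK.
  rewrite [_ *m (graph_ann Pc *m w)]mx11_scalar -(sympl_form_graph _ symPc Lv).
  by rewrite tr_scalar_mx scale_scalar_mx mulVf.
by move: dmu_gt; rewrite ltr_ndivlMr // mulN1r => ?; lra.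
Qed.

End StabilizingSubspace.

Unset Implicit Arguments.
Set Strict Implicit.
Set Printing Implicit Defensive.

Theorem theorem2 (R : realType) (n : nat) (A Q D P : 'M[R]_n)
  (symQ : Q^T = Q) (symD : D^T = D)
  (hstab : stabilizable A D) (hdet : detectable Q A)
  (hP : unique_stabilizing_sol A Q D P)
  (mu : R[i]) (v vm : 'cV[R[i]]_(n + n))
  (mu_nonreal : complex.Im mu != 0)
  (hv : v != 0) (hvE : cmx (hamiltonian A Q D) *m v = mu *: v)
  (hvm : vm != 0) (hvmE : cmx (hamiltonian A Q D) *m vm = (- mu) *: vm)
  (hmult : semisimple_eig (cmx (hamiltonian A Q D)) mu)
  (hpair : (v^T *m Jmx n *m vm) 0 0 != 0)
  (dmu : R) :
  let theta := ((v^T *m Jmx n *m vm) 0 0)^-1 in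
  let p := theta *: (Jmx n *m vm) in
  let q := theta *: (Jmx n *m v) in
  exists At Qt Dt : 'M[R]_n,
    [/\ Qt^T = Qt, Dt^T = Dt,
        hamiltonian A Q D + (2 * dmu) *: Remx (v *m p^T + vm *m q^T)
          = hamiltonian At Qt Dt
      & dmu / complex.Re mu > -1 -> unique_stabilizing_sol At Qt Dt P].
Proof.
move=> theta p q.
have [At [Qt [Dt [symQt symDt eqH]]]] :=
  hamiltonian_add_Re_pair_dyad A (2 * dmu) v vm symQ symD.
exists At, Qt, Dt; split; [exact: symQt | exact: symDt | exact: eqH | move=> dmu_gt].
have stabP := hP.1.
have [Lv | Lvm] := graph_ann_eigvec_pair symQ symD stabP hvE hvmE.
  exact: (pair_perturbation_stabilizing symQ symD stabP hvE hvmE mu_nonreal Lv hpair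
    dmu_gt symQt symDt eqH).
(* Swapping v and vm negates mu, dmu and the pair dyad. *)
apply: (pair_perturbation_stabilizing symQ symD stabP (w := v) (mu := - mu) (dmu := - dmu)
  hvmE _ _ Lvm _ _ symQt symDt).
- by rewrite opprK.
- by rewrite ImN oppr_eq0.
- by rewrite sympl_formC oppr_eq0.
- by rewrite ReN invrN mulrNN.
by rewrite pair_dyadC RemxN scalerN -scaleNr -mulrN opprK.
Qed.
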